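(* Let $R$ be a finitely generated standard algebra. Assume that for every sufficiently large integer $d$, the set of all finitely generated homogeneous right ideals $I$ of $R$ with $m(I)\le d$ forms a rate filtration. Then $R$ is projective (right) coherent.
   Context: $R$ standard: graded, $R_0=k$, generated by $R_1$, $R_+=\bigoplus_{i>0}R_i$. $R$ is projective coherent if the kernel of every homogeneous homomorphism between finitely generated graded free right $R$-modules is finitely generated. For a homogeneous right ideal $J$, $m(J)$ is the maximal degree of a minimal homogeneous generator. A rate filtration is a set $\mathbf F$ of finitely generated homogeneous right ideals with $0,R_+\in\mathbf F$ such that for every $0\ne I\in\mathbf F$ there exist $J\in\mathbf F$, $J\ne I$, and a homogeneous $x\in I$ with $I=J+xR$, $m(J)\le m(I)$, and $\{a\in R: xa\in J\}\in\mathbf F$. *)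

From HB Require Import structures.
From mathcomp Require Import all_boot all_order all_algebra.
Set Implicit Arguments. Unset Strict Implicit. Unset Printing Implicit Defensive.
Import Order.TTheory GRing.Theory Num.Theory.
Local Open Scope ring_scope.

(* A (not necessarily commutative) k-algebra R is graded by a family of
   predicates G : nat -> R -> Prop, G i x meaning "x is homogeneous of degree i",
   i.e. x \in R_i. *)

Section Graded.
Variables (k : fieldType) (R : algType k) (G : nat -> R -> Prop).

Definition is_graded : Prop :=
  [/\ (forall i, G i 0),
      (forall i x y, G i x -> G i y -> G i (x + y)),
      (forall i (c : k) x, G i x -> G i (c *: x)) &
      (forall i j x y, G i x -> G j y -> G (i + j)%N (x * y))] /\
  (forall x, exists n (f : nat -> R),
          (forall i, G i (f i)) /\ x = \sum_(i < n) f i) /\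
  (forall n (f : nat -> R), (forall i, G i (f i)) ->
          \sum_(i < n) f i = 0 -> forall i, (i < n)%N -> f i = 0).

Definition is_standard : Prop :=
  [/\ is_graded,
      (forall x, G 0 x <-> exists c : k, x = c%:A) &
      (forall n x, G n.+1 x -> exists p (a b : 'I_p -> R),
          (forall l, G n (a l) /\ G 1 (b l)) /\ x = \sum_(l < p) a l * b l)].

(* finitely generated standard algebra: R_1 is finite dimensional *)
Definition is_fg_standard : Prop :=
  is_standard /\
  exists s : seq R, (forall y, y \in s -> G 1 y) /\
    (forall y, G 1 y -> exists c : 'I_(size s) -> k,
        y = \sum_(i < size s) c i *: s`_i).

Definition homogeneous (x : R) : Prop := exists n, G n x.

Definition rspan (s : seq R) (x : R) : Prop :=
  exists r : 'I_(size s) -> R, x = \sum_(i < size s) s`_i * r i.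

Definition is_rideal (I : R -> Prop) : Prop :=
  [/\ I 0, (forall x y, I x -> I y -> I (x + y)) &
      (forall x r, I x -> I (x * r))].

Definition is_homogeneous_ideal (I : R -> Prop) : Prop :=
  forall x, I x -> exists n (f : nat -> R),
    (forall i, G i (f i) /\ I (f i)) /\ x = \sum_(i < n) f i.

Definition is_fg (I : R -> Prop) : Prop :=
  exists s : seq R, forall x, I x <-> rspan s x.

Definition fg_hom_rideal (I : R -> Prop) : Prop :=
  [/\ is_rideal I, is_homogeneous_ideal I & is_fg I].

Definition eqI (I J : R -> Prop) : Prop := forall x, I x <-> J x.

Definition zeroI : R -> Prop := fun x => x = 0.

Definition Rplus : R -> Prop := fun x =>
  exists n (f : nat -> R), (forall i, G i.+1 (f i)) /\ x = \sum_(i < n) f i.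

Definition minimal_hgens (I : R -> Prop) (s : seq (nat * R)) : Prop :=
  [/\ (forall p, p \in s -> G p.1 p.2),
      (forall x, I x <-> rspan (map snd s) x) &
      (forall i, (i < size s)%N ->
         ~ rspan (map snd (take i s ++ drop i.+1 s)) (nth (0%N, 0) s i).2)].

(* m(I) = n : maximal degree of a minimal homogeneous generator (0 if I = 0) *)
Definition mval (I : R -> Prop) (n : nat) : Prop :=
  exists s, minimal_hgens I s /\ n = \max_(p <- s) p.1.

Definition m_le (I : R -> Prop) (d : nat) : Prop :=
  forall n, mval I n -> (n <= d)%N.

Definition m_leI (J I : R -> Prop) : Prop :=
  forall n n', mval J n -> mval I n' -> (n <= n')%N.

Definition is_rate_filtration (F : (R -> Prop) -> Prop) : Prop :=
  [/\ (forall I, F I -> fg_hom_rideal I),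
      F zeroI, F Rplus &
      (forall I, F I -> ~ eqI I zeroI ->
         exists J x, [/\ F J, ~ eqI J I, homogeneous x & I x] /\
           [/\ eqI I (fun y => exists a b, J a /\ y = a + x * b),
              m_leI J I & F (fun a => J (x * a))])].

Definition Fdeg (d : nat) : (R -> Prop) -> Prop :=
  fun I => fg_hom_rideal I /\ m_le I d.

(* A homogeneous homomorphism between f.g. graded free right modules
   (+)_j R(-b_j) -> (+)_i R(-c_i), given by a matrix acting on columns. *)
Definition homogeneous_mx m n (A : 'M[R]_(m, n)) (b : 'I_n -> nat)
    (c : 'I_m -> nat) : Prop :=
  forall i j, A i j = 0 \/ (c i <= b j)%N /\ G (b j - c i)%N (A i j).

Definition ker_fg m n (A : 'M[R]_(m, n)) : Prop :=
  exists p (w : 'I_p -> 'cV[R]_n), (forall l, A *m w l = 0) /\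
    forall v : 'cV[R]_n, A *m v = 0 ->
      exists r : 'I_p -> R, v = \sum_(l < p) w l *m (r l)%:M.

Definition projective_coherent : Prop :=
  forall m n (A : 'M[R]_(m, n)) b c, homogeneous_mx A b c -> ker_fg A.

End Graded.

From mathcomp Require Import all_boot all_order all_algebra zify.
From Stdlib Require Import IndefiniteDescription Classical.
Set Implicit Arguments. Unset Strict Implicit. Unset Printing Implicit Defensive.
Import Order.TTheory GRing.Theory Num.Theory.
Local Open Scope ring_scope.

(* Whether a row vector has finitely generated syzygies depends only on the
   right ideal it generates (Schanuel), and if [t] generates [J] then the
   syzygies of [(t, x)] are generated by those of [t] together with one lift of
   each generator of the colon ideal [(J : x)].
   Fix [d] so large that the ideals with [m(I) <= d] form a rate filtration.
   A nonzero such [I] is [J + xR] with [J] and [(J : x)] in the filtration and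
   [J <> I]; since [I] is generated inside the finite-dimensional space
   [R_0 + ... + R_d], the intersection of [J] with that space is strictly
   smaller than that of [I], and induction on its dimension shows that every
   ideal of the filtration has finitely generated syzygies.  This covers all
   homogeneous rows.  A homogeneous matrix is then handled one row at a time:
   the kernel of the first row is the image of a homogeneous matrix [K], and
   the kernel of the whole matrix is [K] applied to the kernel of the
   remaining rows times [K]. *)

Lemma big_ord_widen_if (V : zmodType) n N (f : nat -> V) : (n <= N)%N ->
  \sum_(i < n) f i = \sum_(i < N) (if (i < n)%N then f i else 0).
Proof.
move=> nN; rewrite -(big_mkord xpredT f).
rewrite -(big_mkord xpredT (fun i => if (i < n)%N then f i else 0)).
rewrite [RHS](@big_cat_nat _ _ _ n) //= [X in _ = _ + X]big1_seq ?addr0.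
  by rewrite !big_nat; apply: eq_bigr => i /andP[_ ->].
by move=> i /andP[_]; rewrite mem_index_iota => /andP[ni _]; rewrite ltnNge ni.
Qed.

Lemma big_ord_shift_if (V : zmodType) b N (f : nat -> V) : (b <= N)%N ->
  \sum_(e < N) (if (b <= e)%N then f (e - b)%N else 0) = \sum_(e < N - b) f e.
Proof.
move=> bN; rewrite -(big_mkord xpredT f).
rewrite -(big_mkord xpredT (fun e => if (b <= e)%N then f (e - b)%N else 0)).
rewrite (@big_cat_nat _ _ _ b) //= big1_seq ?add0r; last first.
  by move=> i /andP[_]; rewrite mem_index_iota => /andP[_ ib]; rewrite leqNgt ib.
rewrite -{1}(subnKC bN) (big_addn 0 (b + (N - b)) b) addKn.
by apply: eq_bigr => i _; rewrite leq_addl addnK.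
Qed.

Section HomogeneousComponents.
Variables (k : fieldType) (R : algType k) (G : nat -> R -> Prop).
Hypothesis graded : is_graded G.

Lemma homog0 i : G i 0.
Proof. by case: graded => -[]. Qed.

Lemma homogD i x y : G i x -> G i y -> G i (x + y).
Proof. by case: graded => -[_ h _ _] _; apply: h. Qed.

Lemma homogZ i (c : k) x : G i x -> G i (c *: x).
Proof. by case: graded => -[_ _ h _] _; apply: h. Qed.

Lemma homogM i j x y : G i x -> G j y -> G (i + j)%N (x * y).
Proof. by case: graded => -[_ _ _ h] _; apply: h. Qed.

Lemma homogB i x y : G i x -> G i y -> G i (x - y).
Proof. by move=> Gx Gy; rewrite -scaleN1r; apply/homogD/homogZ. Qed.

Lemma homog_sum i (I : Type) (r : seq I) (P : pred I) (F : I -> R) :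
  (forall j, P j -> G i (F j)) -> G i (\sum_(j <- r | P j) F j).
Proof. by move=> GF; apply: big_ind => //; [exact: homog0 | exact: homogD]. Qed.

Lemma homog_sum_eq0 n (f : nat -> R) : (forall i, G i (f i)) ->
  \sum_(i < n) f i = 0 -> forall i, (i < n)%N -> f i = 0.
Proof. by case: graded => _ [_]; apply. Qed.

Lemma graded_decomp x : exists nf : nat * (nat -> R),
  (forall i, G i (nf.2 i)) /\ x = \sum_(i < nf.1) nf.2 i.
Proof. by case: graded => _ [/(_ x) [n [f hf]] _]; exists (n, f). Qed.

Definition hdecomp (x : R) : nat * (nat -> R) :=
  proj1_sig (constructive_indefinite_description _ (graded_decomp x)).

Definition hlen (x : R) : nat := (hdecomp x).1.

Definition hcomp (e : nat) (x : R) : R :=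
  if (e < hlen x)%N then (hdecomp x).2 e else 0.

Lemma hdecompP x : (forall i, G i ((hdecomp x).2 i)) /\ x = \sum_(i < hlen x) (hdecomp x).2 i.
Proof. exact: proj2_sig (constructive_indefinite_description _ (graded_decomp x)). Qed.

Lemma homog_hcomp e x : G e (hcomp e x).
Proof. by rewrite /hcomp; case: ifP => _; [case: (hdecompP x) | exact: homog0]. Qed.

Lemma hcomp_eq0 x e : (hlen x <= e)%N -> hcomp e x = 0.
Proof. by rewrite /hcomp ltnNge => ->. Qed.

Lemma sum_hcomp x N : (hlen x <= N)%N -> x = \sum_(e < N) hcomp e x.
Proof. by move=> xN; rewrite /hcomp; case: (hdecompP x) => _ {1}->; exact: big_ord_widen_if. Qed.

Lemma hcomp_sum_homog x n (f : nat -> R) : (forall i, G i (f i)) ->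
  x = \sum_(i < n) f i -> forall e, hcomp e x = if (e < n)%N then f e else 0.
Proof.
move=> Gf xE e; set N := maxn n (hlen x).
have homog_diff i : G i ((if (i < n)%N then f i else 0) - hcomp i x).
  by apply: homogB; [case: ifP => _; [exact: Gf | exact: homog0] | exact: homog_hcomp].
have sum_diff : \sum_(i < N) ((if (i < n)%N then f i else 0) - hcomp i x) = 0.
  by rewrite sumrB -big_ord_widen_if ?leq_maxl // -xE -sum_hcomp ?leq_maxr ?subrr.
case: (ltnP e N) => eN.
  by apply/esym/eqP; rewrite -subr_eq0; apply/eqP; exact: (homog_sum_eq0 homog_diff sum_diff eN).
rewrite hcomp_eq0; last exact: leq_trans (leq_maxr _ _) eN.
by rewrite ltnNge (leq_trans (leq_maxl _ _) eN).
Qed.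

Lemma hcomp_homog n x e : G n x -> hcomp e x = if e == n then x else 0.
Proof.
move=> Gx; rewrite (@hcomp_sum_homog x n.+1 (fun i => if i == n then x else 0)).
- by case: ltnP => // h; case: eqP => // en; move: h; rewrite en ltnn.
- by move=> i; case: eqP => [->|_] //; exact: homog0.
by rewrite big_ord_recr /= eqxx big1 ?add0r // => i _; rewrite ltn_eqF.
Qed.

Lemma hcomp0 e : hcomp e 0 = 0.
Proof. by rewrite (hcomp_homog _ (homog0 0)); case: eqP. Qed.

Lemma hcompD e x y : hcomp e (x + y) = hcomp e x + hcomp e y.
Proof.
set N := maxn (hlen x) (hlen y).
rewrite (@hcomp_sum_homog (x + y) N (fun i => hcomp i x + hcomp i y)).
- case: ltnP => // Ne; rewrite !hcomp_eq0 ?addr0 //.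
    exact: leq_trans (leq_maxr _ _) Ne.
  exact: leq_trans (leq_maxl _ _) Ne.
- by move=> i; apply: homogD; exact: homog_hcomp.
by rewrite big_split /= -!sum_hcomp ?leq_maxl ?leq_maxr.
Qed.

Lemma hcomp_sum e (I : Type) (r : seq I) (P : pred I) (F : I -> R) :
  hcomp e (\sum_(j <- r | P j) F j) = \sum_(j <- r | P j) hcomp e (F j).
Proof. exact: (big_morph (hcomp e) (hcompD e) (hcomp0 e)). Qed.

Lemma hcompMl b a z e : G b a ->
  hcomp e (a * z) = if (b <= e)%N then a * hcomp (e - b) z else 0.
Proof.
move=> Ga; pose h j := if (b <= j)%N then a * hcomp (j - b) z else 0.
rewrite (@hcomp_sum_homog (a * z) (b + hlen z) h).
- rewrite /h; case: ltnP => // eN; case: ifP => // be.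
  by rewrite hcomp_eq0 ?mulr0 // leq_subRL.
- move=> j; rewrite /h; case: ifP => bj; last exact: homog0.
  by rewrite -{1}(subnKC bj); apply: homogM => //; exact: homog_hcomp.
by rewrite (big_ord_shift_if (fun e => a * hcomp e z)) ?leq_addr // addKn -mulr_sumr -sum_hcomp.
Qed.

End HomogeneousComponents.

Section RightIdealsOfRows.
Variables (k : fieldType) (R : algType k).

Definition rideal_of n (s : 'rV[R]_n) (y : R) : Prop :=
  exists z : 'cV[R]_n, y = (s *m z) 0 0.

Definition row_of_seq (s : seq R) : 'rV[R]_(size s) := \row_(j < size s) s`_j.

Lemma rspan_row_of_seq (s : seq R) y : rspan s y <-> rideal_of (row_of_seq s) y.
Proof.
split=> [[r ->]|[z ->]].
  by exists (\col_i r i); rewrite mxE; apply: eq_bigr => i _; rewrite !mxE.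
by exists (fun i => z i 0); rewrite mxE; apply: eq_bigr => i _; rewrite !mxE.
Qed.

Lemma mulmx_scalar_mxE m n (A : 'M[R]_(m, n)) (a : R) i j : (A *m a%:M) i j = A i j * a.
Proof.
rewrite mxE (bigD1 j) //= mxE eqxx mulr1n big1 ?addr0 // => l /negbTE ne.
by rewrite mxE ne mulr0n mulr0.
Qed.

Section OneRow.
Variables (n : nat) (s : 'rV[R]_n).

Lemma rideal_of0 : rideal_of s 0.
Proof. by exists 0; rewrite mulmx0 mxE. Qed.

Lemma rideal_ofD x y : rideal_of s x -> rideal_of s y -> rideal_of s (x + y).
Proof. by move=> [z1 ->] [z2 ->]; exists (z1 + z2); rewrite mulmxDr [RHS]mxE. Qed.

Lemma rideal_ofMr x r : rideal_of s x -> rideal_of s (x * r).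
Proof. by move=> [z ->]; exists (z *m r%:M); rewrite mulmxA mulmx_scalar_mxE. Qed.

Lemma rideal_ofN x : rideal_of s x -> rideal_of s (- x).
Proof. by move=> sx; rewrite -mulrN1; apply: rideal_ofMr. Qed.

Lemma rideal_of_entry j : rideal_of s (s 0 j).
Proof. by exists (delta_mx j 0); rewrite -(colE j s) mxE. Qed.

Lemma rideal_of_sum (I : Type) (r : seq I) (P : pred I) (F : I -> R) :
  (forall i, P i -> rideal_of s (F i)) -> rideal_of s (\sum_(i <- r | P i) F i).
Proof. by move=> sF; apply: big_ind => //; [exact: rideal_of0 | exact: rideal_ofD]. Qed.

End OneRow.

Lemma rideal_of_sub n1 n2 (s : 'rV[R]_n1) (t : 'rV[R]_n2) y :
  (forall j, rideal_of t (s 0 j)) -> rideal_of s y -> rideal_of t y.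
Proof. by move=> st [z ->]; rewrite mxE; apply: rideal_of_sum => j _; apply/rideal_ofMr/st. Qed.

Lemma rspan0 (s : seq R) : rspan s 0.
Proof. exact/rspan_row_of_seq/rideal_of0. Qed.

Lemma rspanD (s : seq R) x y : rspan s x -> rspan s y -> rspan s (x + y).
Proof. by move=> /rspan_row_of_seq sx /rspan_row_of_seq sy; apply/rspan_row_of_seq/rideal_ofD. Qed.

Lemma rspanMr (s : seq R) x r : rspan s x -> rspan s (x * r).
Proof. by move=> /rspan_row_of_seq sx; apply/rspan_row_of_seq/rideal_ofMr. Qed.

Lemma rspan_sum (s : seq R) (I : Type) (r : seq I) (P : pred I) (F : I -> R) :
  (forall i, P i -> rspan s (F i)) -> rspan s (\sum_(i <- r | P i) F i).
Proof. by move=> sF; apply: big_ind => //; [exact: rspan0 | exact: rspanD]. Qed.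

Lemma rspan_mem (s : seq R) y : y \in s -> rspan s y.
Proof.
move=> ys; apply/rspan_row_of_seq.
have := rideal_of_entry (row_of_seq s) (Ordinal (etrans (index_mem y s) ys)).
by rewrite mxE /= nth_index.
Qed.

Lemma rspan_sub (s t : seq R) y : (forall z, z \in s -> rspan t z) -> rspan s y -> rspan t y.
Proof.
move=> st /rspan_row_of_seq sy; apply/rspan_row_of_seq; apply: rideal_of_sub sy => j.
by rewrite mxE; apply/rspan_row_of_seq/st/mem_nth.
Qed.

Lemma rspan_rideal (J : R -> Prop) (t : seq R) y :
  is_rideal J -> (forall z, z \in t -> J z) -> rspan t y -> J y.
Proof.
move=> [J0 JD JMr] tJ [r ->].
by apply: (big_ind J) => // i _; apply/JMr/tJ/mem_nth.
Qed.

End RightIdealsOfRows.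

Section Syzygies.
Variables (k : fieldType) (R : algType k).

Definition cspan p n (W : 'I_p -> 'cV[R]_n) (v : 'cV[R]_n) : Prop :=
  exists r : 'I_p -> R, v = \sum_(l < p) W l *m (r l)%:M.

Section ColumnSpan.
Variables (p n : nat) (W : 'I_p -> 'cV[R]_n).

Lemma cspan0 : cspan W 0.
Proof. by exists (fun _ => 0); rewrite big1 // => l _; rewrite raddf0 mulmx0. Qed.

Lemma cspanD u v : cspan W u -> cspan W v -> cspan W (u + v).
Proof.
move=> [r1 ->] [r2 ->]; exists (fun l => r1 l + r2 l).
by rewrite -big_split /=; apply: eq_bigr => l _; rewrite raddfD mulmxDr.
Qed.

Lemma cspanMr u a : cspan W u -> cspan W (u *m a%:M).
Proof.
move=> [r ->]; exists (fun l => r l * a); rewrite mulmx_suml.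
by apply: eq_bigr => l _; rewrite scalar_mxM mulmxA.
Qed.

Lemma cspan_gen l : cspan W (W l).
Proof.
exists (fun i => if i == l then 1 else 0); rewrite (bigD1 l) //= eqxx mulmx1.
by rewrite big1 ?addr0 // => i /negbTE ->; rewrite raddf0 mulmx0.
Qed.

Lemma cspan_sum (I : Type) (r : seq I) (P : pred I) (F : I -> 'cV[R]_n) :
  (forall i, P i -> cspan W (F i)) -> cspan W (\sum_(i <- r | P i) F i).
Proof. by move=> WF; apply: big_ind => //; [exact: cspan0 | exact: cspanD]. Qed.

Lemma cspan_mulmx m (B : 'M[R]_(m, n)) v : cspan W v -> cspan (fun l => B *m W l) (B *m v).
Proof. by move=> [r ->]; exists r; rewrite mulmx_sumr; apply: eq_bigr => l _; rewrite mulmxA. Qed.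

End ColumnSpan.

Lemma cspan_sub p1 p2 n (W1 : 'I_p1 -> 'cV[R]_n) (W2 : 'I_p2 -> 'cV[R]_n) v :
  (forall l, cspan W2 (W1 l)) -> cspan W1 v -> cspan W2 v.
Proof. by move=> W12 [r ->]; apply: cspan_sum => l _; apply/cspanMr/W12. Qed.

Lemma cspan_mxE p n (W : 'I_p -> 'cV[R]_n) v :
  cspan W v -> exists u : 'cV[R]_p, v = (\matrix_(j, l) W l j 0) *m u.
Proof.
move=> [r ->]; exists (\col_l r l); apply/matrixP => j i; rewrite (ord1 i) summxE !mxE.
by apply: eq_bigr => l _; rewrite mulmx_scalar_mxE !mxE.
Qed.

Lemma col_sum_delta n (v : 'cV[R]_n) : v = \sum_(j < n) delta_mx j 0 *m (v j 0)%:M.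
Proof.
apply/matrixP => i j; rewrite (ord1 j) summxE (bigD1 i) //= mulmx_scalar_mxE mxE !eqxx mul1r.
by rewrite big1 ?addr0 // => l /negbTE ne; rewrite mulmx_scalar_mxE mxE eq_sym ne mul0r.
Qed.

Lemma ker_fg0 m n : ker_fg (0 : 'M[R]_(m, n)).
Proof.
exists n, (fun j => delta_mx j 0); split=> [l|v _]; first by rewrite mul0mx.
by exists (fun j => v j 0); exact: col_sum_delta.
Qed.

Lemma ker_fg_cat m n (A : 'M[R]_(m, n)) p1 p2
    (W1 : 'I_p1 -> 'cV[R]_n) (W2 : 'I_p2 -> 'cV[R]_n) :
  (forall l, A *m W1 l = 0) -> (forall l, A *m W2 l = 0) ->
  (forall v, A *m v = 0 -> exists v1 v2, [/\ v = v1 + v2, cspan W1 v1 & cspan W2 v2]) ->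
  ker_fg A.
Proof.
move=> AW1 AW2 kerA.
pose W (i : 'I_(p1 + p2)) := match split i with inl a => W1 a | inr b => W2 b end.
exists (p1 + p2), W; split=> [l|v /kerA [v1 [v2 [-> W1v1 W2v2]]]].
  by rewrite /W; case: (split l).
apply: cspanD.
  apply: cspan_sub W1v1 => l; have := cspan_gen W (lshift p2 l).
  by rewrite /W (unsplitK (inl _)).
apply: cspan_sub W2v2 => l; have := cspan_gen W (rshift p1 l).
by rewrite /W (unsplitK (inr _)).
Qed.

(* Schanuel: if [s = t *m be] and [t = s *m al], the kernel of [t] is spanned
   by [be] applied to the kernel of [s] and by the columns of [1 - be *m al]. *)
Lemma ker_fg_eq_rideal n1 n2 (s : 'rV[R]_n1) (t : 'rV[R]_n2) :
  (forall j, rideal_of s (t 0 j)) -> (forall i, rideal_of t (s 0 i)) ->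
  ker_fg s -> ker_fg t.
Proof.
move=> ts st [p [w [sw0 sw]]].
have [za tE'] := functional_choice _ ts; have [zb sE'] := functional_choice _ st.
pose al : 'M[R]_(n1, n2) := \matrix_(i, j) za j i 0.
pose be : 'M[R]_(n2, n1) := \matrix_(i, j) zb j i 0.
have tE : t = s *m al.
  by apply/matrixP => i j; rewrite (ord1 i) tE' !mxE; apply: eq_bigr => l _; rewrite !mxE.
have sE : s = t *m be.
  by apply/matrixP => i j; rewrite (ord1 i) sE' !mxE; apply: eq_bigr => l _; rewrite !mxE.
apply: (@ker_fg_cat _ _ _ _ _ (fun l => be *m w l)
                              (fun j => (1%:M - be *m al) *m delta_mx j 0)).
- by move=> l; rewrite mulmxA -sE.
- by move=> j; rewrite mulmxA mulmxBr mulmx1 mulmxA -sE -tE subrr mul0mx.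
move=> v tv; exists (be *m (al *m v)), ((1%:M - be *m al) *m v); split.
- by rewrite mulmxBl mul1mx mulmxA addrC subrK.
- by apply/cspan_mulmx/sw; rewrite mulmxA -tE.
rewrite (col_sum_delta v) mulmx_sumr; apply: cspan_sum => j _.
by rewrite mulmxA; apply/cspanMr/cspan_gen.
Qed.

Lemma ker_fg_col_mx m1 m2 n p (A1 : 'M[R]_(m1, n)) (A2 : 'M[R]_(m2, n)) (K : 'M[R]_(n, p)) :
  A1 *m K = 0 -> (forall v, A1 *m v = 0 -> exists u : 'cV[R]_p, v = K *m u) ->
  ker_fg (A2 *m K) -> ker_fg (col_mx A1 A2).
Proof.
move=> A1K0 A1K [q [z [A2Kz0 A2Kz]]]; exists q, (fun l => K *m z l); split=> [l|v].
  by rewrite mul_col_mx !mulmxA A1K0 mul0mx A2Kz0 col_mx0.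
rewrite mul_col_mx => /eqP; rewrite col_mx_eq0 => /andP [/eqP /A1K [u ->] /eqP A2Ku].
have [rho ->] := A2Kz u (etrans (esym (mulmxA _ _ _)) A2Ku).
by exists rho; rewrite mulmx_sumr; apply: eq_bigr => l _; rewrite mulmxA.
Qed.

Lemma sum_col_mx m1 m2 n p (A : 'I_p -> 'M[R]_(m1, n)) (B : 'I_p -> 'M[R]_(m2, n)) :
  \sum_(q < p) col_mx (A q) (B q) = col_mx (\sum_(q < p) A q) (\sum_(q < p) B q).
Proof.
apply: (big_rec3 (fun x y z => x = col_mx y z)); first by rewrite col_mx0.
by move=> i y1 y2 y3 _ ->; rewrite add_col_mx.
Qed.

Lemma mx11_eq0 (M : 'M[R]_1) : M 0 0 = 0 -> M = 0.
Proof. by move=> M00; rewrite (mx11_scalar M) M00 raddf0. Qed.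

(* A syzygy [(v1, v2)] of [(t, x)] has [x * v2] in the ideal of [t], so [v2]
   is a combination of the generators [c] of the colon ideal; each [c j] lifts
   to the syzygy [(- ga j, c j)], and the remainder is a syzygy of [t]. *)
Lemma ker_fg_row_mx_colon n q (t : 'rV[R]_n) (x : R) (c : 'rV[R]_q) :
  ker_fg t ->
  (forall a, rideal_of c a -> rideal_of t (x * a)) ->
  (forall a, rideal_of t (x * a) -> rideal_of c a) ->
  ker_fg (row_mx t (x%:M : 'M[R]_1)).
Proof.
move=> [p [w [tw0 tw]]] ct tc.
have [ga tga] := functional_choice _ (fun j : 'I_q => ct _ (rideal_of_entry c j)).
pose B : 'M[R]_(n + 1, n) := col_mx 1%:M 0.
apply: (@ker_fg_cat _ _ _ _ _ (fun l => B *m w l)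
                              (fun j => col_mx (- ga j) ((c 0 j)%:M : 'M[R]_1))).
- by move=> l; rewrite mul_col_mx mul1mx mul0mx mul_row_col tw0 mulmx0 addr0.
- move=> j; rewrite mul_row_col; apply: mx11_eq0.
  by rewrite -scalar_mxM mulmxN mxE [X in X + _]mxE [X in _ + X]mxE eqxx mulr1n tga addNr.
move=> v; rewrite -(vsubmxK v); set v1 := usubmx v; set v2 := dsubmx v => Tv.
have syz : (t *m v1) 0 0 + x * v2 0 0 = 0.
  by move: Tv; rewrite mul_row_col => /matrixP /(_ 0 0); rewrite mxE mul_scalar_mx !mxE.
have [rho v2E] : rideal_of c (v2 0 0).
  by apply: tc; rewrite -(addr0_eq syz); apply: rideal_ofN; exists v1.
pose P := \sum_(j < q) - ga j *m (rho j 0)%:M.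
have v2P : \sum_(j < q) ((c 0 j)%:M : 'M[R]_1) *m (rho j 0)%:M = v2.
  apply/matrixP => i i'; rewrite (ord1 i) (ord1 i') summxE v2E mxE.
  by apply: eq_bigr => j _; rewrite mulmx_scalar_mxE mxE eqxx mulr1n.
have tv1P : t *m (v1 - P) = 0.
  apply: mx11_eq0; rewrite mulmxBr mxE [X in _ + X]mxE /P mulmx_sumr summxE.
  suff -> : \sum_(j < q) (t *m (- ga j *m (rho j 0)%:M)) 0 0 = - (x * v2 0 0).
    by rewrite opprK syz.
  rewrite v2E mxE mulr_sumr -sumrN; apply: eq_bigr => j _.
  by rewrite mulmxA mulmx_scalar_mxE mulmxN mxE -tga mulNr mulrA.
exists (col_mx (v1 - P) 0), (col_mx P v2); split.
- by rewrite add_col_mx subrK add0r.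
- have [r ->] := tw _ tv1P.
  have -> : col_mx (\sum_(l < p) w l *m (r l)%:M) 0 = B *m \sum_(l < p) w l *m (r l)%:M.
    by rewrite mul_col_mx mul1mx mul0mx.
  by apply: cspan_mulmx; exists r.
exists (fun j => rho j 0); rewrite -v2P /P -sum_col_mx.
by apply: eq_bigr => j _; rewrite mul_col_mx.
Qed.

End Syzygies.

Section DropNth.
Variables (T : eqType) (s : seq T) (x0 : T) (i : nat).

Lemma mem_drop_nth z : z \in take i s ++ drop i.+1 s -> z \in s.
Proof. by rewrite mem_cat => /orP [/mem_take|/mem_drop]. Qed.

Lemma mem_drop_nthP z : (i < size s)%N -> z \in s ->
  z = nth x0 s i \/ z \in take i s ++ drop i.+1 s.
Proof.
move=> hi; rewrite -{1}(cat_take_drop i s) (drop_nth x0 hi) mem_cat inE.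
by case/orP => [zs|/orP [/eqP ->|zs]]; [right; rewrite mem_cat zs | left | right; rewrite mem_cat zs orbT].
Qed.

Lemma nth_mem_drop_nth q : (q < size s)%N -> q != i ->
  nth x0 s q \in take i s ++ drop i.+1 s.
Proof.
move=> hq; rewrite mem_cat; case: (ltngtP q i) => // qi _.
  by rewrite -(nth_take x0 qi) mem_nth // size_take; case: (ltnP i (size s)) => _; lia.
by rewrite -(subnKC qi) -nth_drop mem_nth ?orbT // size_drop; lia.
Qed.

End DropNth.

Section HomogeneousGenerators.
Variables (k : fieldType) (R : algType k) (G : nat -> R -> Prop).

Lemma minimal_hgens_sub (I : R -> Prop) (s : seq (nat * R)) :
  (forall p, p \in s -> G p.1 p.2) -> (forall y, I y <-> rspan (map snd s) y) ->
  exists s', minimal_hgens G I s' /\ {subset s' <= s}.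
Proof.
elim: {s}(size s) {-2}s (leqnn (size s)) => [|N IH] s.
  by rewrite leqn0 => /nilP -> _ Igen; exists [::]; split=> //; split=> // i; rewrite ltn0.
move=> sN sG Igen.
case: (classic (exists i, (i < size s)%N /\
   rspan (map snd (take i s ++ drop i.+1 s)) (nth (0%N, 0) s i).2)); last first.
  by move=> nored; exists s; split=> //; split=> // i hi red; apply: nored; exists i.
move=> [i [hi red]].
have size_drop_i : (size (take i s ++ drop i.+1 s) <= N)%N.
  by rewrite size_cat size_take size_drop hi; lia.
have Igen' y : I y <-> rspan (map snd (take i s ++ drop i.+1 s)) y.
  rewrite Igen; split; apply: rspan_sub => _ /mapP [p ps ->].
    by case: (mem_drop_nthP (0%N, 0) hi ps) => [->|ps'] //; apply/rspan_mem/map_f.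
  by apply/rspan_mem/map_f/(mem_drop_nth ps).
have [s' [ms' s's]] := IH _ size_drop_i (fun p ps => sG p (mem_drop_nth ps)) Igen'.
by exists s'; split=> // p /s's /mem_drop_nth.
Qed.

Lemma fg_hom_rideal_hgens (I : R -> Prop) : fg_hom_rideal G I ->
  exists s : seq (nat * R), (forall p, p \in s -> G p.1 p.2) /\
    (forall y, I y <-> rspan (map snd s) y).
Proof.
move=> [[I0 ID IMr] Ihom [t It]].
have decomp y : exists nf : nat * (nat -> R), I y ->
    (forall i, G i (nf.2 i) /\ I (nf.2 i)) /\ y = \sum_(i < nf.1) nf.2 i.
  case: (classic (I y)) => [/Ihom [n [f hf]]|nIy]; first by exists (n, f).
  by exists (0%N, fun _ => 0).
have [F hF] := functional_choice _ decomp.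
have tI z : z \in t -> I z by move=> zt; apply/It/rspan_mem.
pose s := flatten [seq [seq (i, (F z).2 i) | i <- iota 0 (F z).1] | z <- t].
have sGI p : p \in s -> G p.1 p.2 /\ I p.2.
  move=> /flatten_mapP [z /tI Iz /mapP [i _ ->]].
  by have [GI _] := hF z Iz; exact: GI.
exists s; split=> [p /sGI []//|y]; split.
  move=> /It; apply: rspan_sub => z zt; have [_ ->] := hF z (tI z zt).
  apply: rspan_sum => i _; apply/rspan_mem/mapP; exists (val i, (F z).2 i) => //.
  by apply/flatten_mapP; exists z => //; apply: map_f; rewrite mem_iota ltn_ord.
move=> sy; apply/It; apply: rspan_sub sy => _ /mapP [p /sGI [_ Ip] ->].
exact/It.
Qed.

Lemma Fdeg_hgens d (I : R -> Prop) : Fdeg G d I ->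
  exists s : seq (nat * R), (forall p, p \in s -> G p.1 p.2 /\ (p.1 <= d)%N) /\
    (forall y, I y <-> rspan (map snd s) y).
Proof.
move=> [fgI mI]; have [s0 [s0G s0I]] := fg_hom_rideal_hgens fgI.
have [s [ms _]] := minimal_hgens_sub s0G s0I.
have md := mI _ (ex_intro _ s (conj ms erefl)).
case: ms => sG sI _; exists s; split=> // p ps; split; first exact: sG.
exact: leq_trans (leq_bigmax_seq _ ps _) md.
Qed.

End HomogeneousGenerators.

Section LinearSpans.
Variables (k : fieldType) (R : algType k).

Definition kspan (L : seq R) (y : R) : Prop :=
  exists c : 'I_(size L) -> k, y = \sum_i c i *: L`_i.

Definition kfree (r : nat) (y : nat -> R) : Prop :=
  forall c : nat -> k, \sum_(i < r) c i *: y i = 0 -> forall i, (i < r)%N -> c i = 0.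

Section OneSpan.
Variable L : seq R.

Lemma kspan0 : kspan L 0.
Proof. by exists (fun _ => 0); rewrite big1 // => i _; rewrite scale0r. Qed.

Lemma kspanD x y : kspan L x -> kspan L y -> kspan L (x + y).
Proof.
move=> [c1 ->] [c2 ->]; exists (fun i => c1 i + c2 i).
by rewrite -big_split; apply: eq_bigr => i _; rewrite scalerDl.
Qed.

Lemma kspanZ a x : kspan L x -> kspan L (a *: x).
Proof.
move=> [c ->]; exists (fun i => a * c i); rewrite scaler_sumr.
by apply: eq_bigr => i _; rewrite scalerA.
Qed.

Lemma kspan_sum (I : Type) (r : seq I) (P : pred I) (F : I -> R) :
  (forall i, P i -> kspan L (F i)) -> kspan L (\sum_(i <- r | P i) F i).
Proof. by move=> LF; apply: big_ind => //; [exact: kspan0 | exact: kspanD]. Qed.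

Lemma kspan_mem x : x \in L -> kspan L x.
Proof.
move=> xL; pose ix := Ordinal (etrans (index_mem x L) xL).
exists (fun i => if i == ix then 1 else 0).
rewrite (bigD1 ix) //= eqxx scale1r nth_index // big1 ?addr0 // => i /negbTE ->.
by rewrite scale0r.
Qed.

End OneSpan.

Lemma kspan_sub (A B : seq R) y : (forall z, z \in A -> kspan B z) -> kspan A y -> kspan B y.
Proof. by move=> AB [c ->]; apply: kspan_sum => i _; apply/kspanZ/AB/mem_nth. Qed.

Lemma kspan_mul (A B : seq R) y z : kspan A y -> kspan B z ->
  kspan [seq a * b | a <- A, b <- B] (y * z).
Proof.
move=> [c ->] [c' ->]; rewrite mulr_suml; apply: kspan_sum => i _.
rewrite mulr_sumr; apply: kspan_sum => j _.
by rewrite -scalerAl -scalerAr; apply/kspanZ/kspanZ/kspan_mem/allpairs_f; apply: mem_nth.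
Qed.

(* A free family in the span of [L] has at most [size L] members: its
   coordinate matrix on [L] is row free. *)
Lemma kfree_size_le (L : seq R) r y : kfree r y ->
  (forall i, (i < r)%N -> kspan L (y i)) -> (r <= size L)%N.
Proof.
move=> yfree yL.
have coord i : exists c : 'I_(size L) -> k, (i < r)%N -> y i = \sum_j c j *: L`_j.
  case: (ltnP i r) => [/yL [c yc]|_]; first by exists c.
  by exists (fun _ => 0).
have [u yu] := functional_choice _ coord.
pose U : 'M[k]_(r, size L) := \matrix_(i, j) u i j.
suff /eqP <- : row_free U by exact: rank_leq_col.
apply: inj_row_free => v vU.
pose c (i : nat) := \sum_(j < r | val j == i) v 0 j.
have cE (j : 'I_r) : c j = v 0 j.
  rewrite /c (bigD1 j) //= big1 ?addr0 // => l /andP [/eqP lj /negbTE nl].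
  by move: nl; rewrite (val_inj lj) eqxx.
suff /yfree c0 : \sum_(i < r) c i *: y i = 0.
  by apply/matrixP => i j; rewrite (ord1 i) mxE -cE c0.
transitivity (\sum_(j < size L) (v *m U) 0 j *: L`_j); last first.
  by rewrite vU big1 // => j _; rewrite mxE scale0r.
transitivity (\sum_(i < r) \sum_(j < size L) (v 0 i * u i j) *: L`_j).
  apply: eq_bigr => i _; rewrite cE (yu i (ltn_ord i)) scaler_sumr.
  by apply: eq_bigr => j _; rewrite scalerA.
rewrite exchange_big /=; apply: eq_bigr => j _; rewrite mxE scaler_suml.
by apply: eq_bigr => i _; rewrite mxE.
Qed.

Lemma kfree_extend (J : R -> Prop) r y x : is_rideal J -> kfree r y ->
  (forall i, (i < r)%N -> J (y i)) -> ~ J x ->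
  kfree r.+1 (fun i => if (i < r)%N then y i else x).
Proof.
move=> [J0 JD JMr] yfree yJ nJx c; rewrite big_ord_recr /= ltnn.
have JZ a z : J z -> J (a *: z) by move=> Jz; rewrite -mulr_algr; apply: JMr.
under eq_bigr => i _ do rewrite /= ltn_ord.
move=> sum0.
have cr : c r = 0.
  apply/eqP/negPn/negP => cr0; apply: nJx.
  have -> : x = (- (c r)^-1) *: \sum_(i < r) c i *: y i.
    rewrite [\sum_(i < r) _](canRL opprK (addr0_eq sum0)).
    by rewrite scalerN scaleNr opprK scalerA mulVf // scale1r.
  by apply: (JZ); apply: (big_ind J) => // i _; apply: JZ; apply: yJ.
move: sum0; rewrite cr scale0r addr0 => /yfree c0 i.
by rewrite ltnS leq_eqVlt => /predU1P [->|/c0].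
Qed.

End LinearSpans.

Section Monomials.
Variables (k : fieldType) (R : algType k) (G : nat -> R -> Prop).

Definition monomials (s1 : seq R) (n : nat) : seq R :=
  iter n (fun M => [seq a * b | a <- M, b <- s1]) [:: 1].

Definition monomials_le (s1 : seq R) (d : nat) : seq R :=
  flatten [seq monomials s1 i | i <- iota 0 d.+1].

Hypothesis standard : is_standard G.
Variable s1 : seq R.
Hypothesis s1_span : forall y, G 1 y -> exists c : 'I_(size s1) -> k,
  y = \sum_(i < size s1) c i *: s1`_i.

Lemma homog_kspan_monomials n x : G n x -> kspan (monomials s1 n) x.
Proof.
case: standard => _ G0 GS; elim: n x => [|n IH] x.
  by move=> /G0 [c ->]; exists (fun _ => c); rewrite big_ord1.
move=> /GS [p [a [b [abG ->]]]]; apply: kspan_sum => l _.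
by have [aG bG] := abG l; exact: kspan_mul (IH _ aG) (s1_span bG).
Qed.

Lemma homog_kspan_monomials_le d n x : (n <= d)%N -> G n x -> kspan (monomials_le s1 d) x.
Proof.
move=> nd /homog_kspan_monomials; apply: kspan_sub => z zM.
by apply/kspan_mem/flatten_mapP; exists n => //; rewrite mem_iota; lia.
Qed.

End Monomials.

Section GoodIdeals.
Variables (k : fieldType) (R : algType k).

Definition good (I : R -> Prop) : Prop :=
  forall n (s : 'rV[R]_n), (forall y, I y <-> rideal_of s y) -> ker_fg s.

Lemma good_zero (I : R -> Prop) : eqI I (@zeroI k R) -> good I.
Proof.
move=> I0 n s sI; suff -> : s = 0 by exact: ker_fg0.
by apply/matrixP => i j; rewrite (ord1 i) mxE; apply/I0/sI/rideal_of_entry.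
Qed.

Lemma rideal_of_row_mx_scalar n (t : 'rV[R]_n) x y :
  rideal_of (row_mx t (x%:M : 'M[R]_1)) y <-> exists a b, rideal_of t a /\ y = a + x * b.
Proof.
split=> [[z ->]|[a [b [[z ->] ->]]]].
  rewrite -(vsubmxK z) mul_row_col mxE.
  exists ((t *m usubmx z) 0 0), (dsubmx z 0 0); split; first by exists (usubmx z).
  by rewrite mul_scalar_mx [X in _ + X = _]mxE.
exists (col_mx z (b%:M : 'M[R]_1)).
by rewrite mul_row_col -scalar_mxM [RHS]mxE [X in _ = _ + X]mxE eqxx mulr1n.
Qed.

Lemma good_add_principal (I J : R -> Prop) x : is_fg J -> is_fg (fun a => J (x * a)) ->
  (forall y, I y <-> exists a b, J a /\ y = a + x * b) -> good J -> good I.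
Proof.
move=> [t tJ] [c cJx] IE goodJ n s sI.
have tJ' y : J y <-> rideal_of (row_of_seq t) y by rewrite tJ rspan_row_of_seq.
have cJx' a : J (x * a) <-> rideal_of (row_of_seq c) a by rewrite cJx rspan_row_of_seq.
have ker_tx : ker_fg (row_mx (row_of_seq t) (x%:M : 'M[R]_1)).
  apply: ker_fg_row_mx_colon; first exact/goodJ.
    by move=> a /cJx' /tJ'.
  by move=> a /tJ' /cJx'.
have txI y : rideal_of (row_mx (row_of_seq t) (x%:M : 'M[R]_1)) y <-> I y.
  rewrite rideal_of_row_mx_scalar IE.
  by split=> -[a [b [ha ->]]]; exists a, b; split=> //; apply/tJ'.
apply: ker_fg_eq_rideal ker_tx => j.
  by apply/txI/sI/rideal_of_entry.
by apply/sI/txI/rideal_of_entry.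
Qed.

Definition kdim_le (I : R -> Prop) (L : seq R) (B : nat) : Prop :=
  forall r y, kfree r y -> (forall i, (i < r)%N -> I (y i) /\ kspan L (y i)) -> (r <= B)%N.

Lemma kdim_le_proper (I J : R -> Prop) L g B : is_rideal J -> (forall a, J a -> I a) ->
  I g -> kspan L g -> ~ J g -> kdim_le I L B -> (0 < B)%N /\ kdim_le J L B.-1.
Proof.
move=> Jid JI Ig Lg nJg IB.
suff JB r y : kfree r y -> (forall i, (i < r)%N -> J (y i) /\ kspan L (y i)) -> (r < B)%N.
  split; first by apply: (JB 0%N (fun _ => 0)) => [c _ i|i]; rewrite ltn0.
  by move=> r y /JB yJL /yJL; lia.
move=> yfree yJL; apply: (IB r.+1 (fun i => if (i < r)%N then y i else g)).
  by apply: (kfree_extend Jid) => // i /yJL [].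
move=> i; rewrite ltnS leq_eqVlt => /predU1P [->|ir]; first by rewrite ltnn.
by rewrite ir; have [Jy Ly] := yJL i ir; split=> //; apply: JI.
Qed.

End GoodIdeals.

Section RateFiltration.
Variables (k : fieldType) (R : algType k) (G : nat -> R -> Prop) (d : nat) (L : seq R).
Hypothesis rate_d : is_rate_filtration G (Fdeg G d).
Hypothesis L_span : forall n x, (n <= d)%N -> G n x -> kspan L x.

Lemma rate_step I : Fdeg G d I -> ~ eqI I (@zeroI k R) ->
  exists J x g, [/\ Fdeg G d J, Fdeg G d (fun a => J (x * a)),
     (forall y, I y <-> exists a b, J a /\ y = a + x * b), (forall a, J a -> I a) &
     [/\ I g, kspan L g & ~ J g]].
Proof.
move=> FI nzI; case: rate_d => _ _ _ /(_ I FI nzI) [J [x [[FJ neqJI _ Ix] [IE _ FJx]]]].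
have JI a : J a -> I a by move=> Ja; apply/IE; exists a, 0; rewrite mulr0 addr0.
exists J, x; suff [g gP] : exists g, [/\ I g, kspan L g & ~ J g] by exists g; split.
apply: NNPP => noG; apply: neqJI => y; split; first exact: JI.
have [s [sG sI]] := Fdeg_hgens FI.
have [[Jid _ _] _] := FJ.
move=> /sI; apply: rspan_rideal => // _ /mapP [p ps ->].
apply: NNPP => nJp; apply: noG; exists p.2; split => //.
  exact/sI/rspan_mem/map_f.
by have [Gp pd] := sG p ps; exact: L_span pd Gp.
Qed.

Lemma Fdeg_good_kdim B I : Fdeg G d I -> kdim_le I L B -> good I.
Proof.
elim: B I => [|B IH] I FI IB; have [/good_zero //|nzI] := classic (eqI I (@zeroI k R));
  have [J [x [g [FJ FJx IE JI [Ig Lg nJg]]]]] := rate_step FI nzI;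
  have [[Jid _ fgJ] _] := FJ;
  have [B_gt0 JB] := kdim_le_proper Jid JI Ig Lg nJg IB; first by [].
have [[_ _ fgJx] _] := FJx.
exact: good_add_principal fgJ fgJx IE (IH _ FJ JB).
Qed.

Lemma Fdeg_good I : Fdeg G d I -> good I.
Proof.
move=> FI; apply: (Fdeg_good_kdim (B := size L) FI) => r y yfree yIL.
by apply: kfree_size_le yfree _ => i /yIL [].
Qed.

End RateFiltration.

Lemma rideal_of_fg (k : fieldType) (R : algType k) n (a : 'rV[R]_n) : is_fg (rideal_of a).
Proof.
exists [seq a 0 j | j <- enum 'I_n] => y; split.
  move=> ay; apply/rspan_row_of_seq; apply: rideal_of_sub ay => j.
  by apply/rspan_row_of_seq/rspan_mem/map_f; rewrite mem_enum.
move/rspan_row_of_seq; apply: rideal_of_sub => j; rewrite mxE.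
by have /mapP [j' _ ->] := mem_nth 0 (ltn_ord j); exact: rideal_of_entry.
Qed.

Section HomogeneousRows.
Variables (k : fieldType) (R : algType k) (G : nat -> R -> Prop).
Hypothesis graded : is_graded G.
Variables (n : nat) (a : 'rV[R]_n) (deg : 'I_n -> nat).
Hypothesis homog_a : forall j, G (deg j) (a 0 j).

Lemma rideal_of_homog : is_homogeneous_ideal G (rideal_of a).
Proof.
move=> _ [z ->]; set y := (a *m z) 0 0.
exists (hlen graded y), (fun e => hcomp graded e y); split; last exact: sum_hcomp.
move=> e; split; first exact: homog_hcomp.
rewrite /y mxE hcomp_sum; apply: rideal_of_sum => j _.
rewrite (hcompMl _ _ _ (homog_a j)); case: ifP => _; last exact: rideal_of0.
exact/rideal_ofMr/rideal_of_entry.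
Qed.

(* A minimal generator [p] of degree [> d] is redundant: the degree-[deg j]
   component of an expression of [a 0 j] in the minimal generators only
   involves generators of degree [<= deg j <= d]. *)
Lemma rideal_of_m_le d : (forall j, (deg j <= d)%N) -> m_le G (rideal_of a) d.
Proof.
move=> deg_d m [s [[sG sI smin] ->]]; apply/bigmax_leqP_seq => p ps _.
rewrite leqNgt; apply/negP => dp.
have ip : (index p s < size s)%N by rewrite index_mem.
apply: (smin _ ip); rewrite nth_index //.
apply/rspan_row_of_seq; apply: rideal_of_sub (_ : rideal_of a p.2) => [j|]; last first.
  exact/sI/rspan_mem/map_f.
apply/rspan_row_of_seq; have /sI [r ar] := rideal_of_entry a j.
have <- : hcomp graded (deg j) (a 0 j) = a 0 j by rewrite (hcomp_homog _ _ (homog_a j)) eqxx.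
rewrite [X in hcomp _ _ X]ar hcomp_sum.
apply: rspan_sum => q _; have qs : (q < size s)%N by rewrite -(size_map snd s).
rewrite (nth_map (0%N, 0)) // (hcompMl _ _ _ (sG _ (mem_nth _ qs))).
case: ifP => qj; last exact: rspan0.
apply/rspanMr/rspan_mem/map_f/nth_mem_drop_nth => //.
apply: contraTneq qj => ->; rewrite nth_index // -ltnNge.
exact: leq_ltn_trans (deg_d j) dp.
Qed.

End HomogeneousRows.

Section HomogeneousSyzygies.
Variables (k : fieldType) (R : algType k) (G : nat -> R -> Prop).
Hypothesis graded : is_graded G.

(* The degree-[e] part of a column for the shifted grading [R(-b)]. *)
Definition hcol n (b : 'I_n -> nat) (e : nat) (v : 'cV[R]_n) : 'cV[R]_n :=
  \col_j (if (b j <= e)%N then hcomp graded (e - b j) (v j 0) else 0).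

Lemma mulmx_hcol m n (A : 'M[R]_(m, n)) b c e v : homogeneous_mx G A b c ->
  A *m v = 0 -> A *m hcol b e v = 0.
Proof.
move=> homA Av; apply/matrixP => i j; rewrite (ord1 j) [RHS]mxE mxE.
case: (leqP (c i) e) => ci.
  transitivity (hcomp graded (e - c i) ((A *m v) i 0)); last by rewrite Av mxE hcomp0.
  rewrite [in RHS]mxE hcomp_sum; apply: eq_bigr => l _; rewrite mxE.
  case: (homA i l) => [->|[cb GA]]; first by rewrite !mul0r hcomp0.
  rewrite (hcompMl _ _ _ GA); case: (leqP (b l) e) => bl.
    by rewrite ifT; [congr (_ * hcomp _ _ _) | ]; lia.
  by rewrite ifF ?mulr0 //; apply/negbTE; rewrite -ltnNge; lia.
apply: big1 => l _; rewrite mxE.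
case: (homA i l) => [->|[cb _]]; first by rewrite mul0r.
by rewrite ifF ?mulr0 //; apply/negbTE; rewrite -ltnNge; lia.
Qed.

Lemma sum_hcol n b (v : 'cV[R]_n) N :
  (forall j, (b j + hlen graded (v j 0%R) <= N)%N) -> v = \sum_(e < N) hcol b e v.
Proof.
move=> vN; apply/matrixP => j i; rewrite (ord1 i) summxE.
under eq_bigr => e _ do rewrite mxE.
rewrite (big_ord_shift_if (fun e => hcomp graded e (v j 0))); last by have := vN j; lia.
by apply: sum_hcomp; have := vN j; lia.
Qed.

Lemma ker_fg_homog_gens m n (A : 'M[R]_(m, n)) b c : homogeneous_mx G A b c -> ker_fg A ->
  exists p (K : 'M[R]_(n, p)) (e : 'I_p -> nat), [/\ A *m K = 0,
    forall v, A *m v = 0 -> exists u : 'cV[R]_p, v = K *m u & homogeneous_mx G K e b].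
Proof.
move=> homA [p0 [w [Aw0 Aw]]].
pose N := (\max_(l : 'I_p0) \max_(j : 'I_n) (b j + hlen graded (w l j 0%R)))%N.
have wN l j : (b j + hlen graded (w l j 0%R) <= N)%N.
  exact: leq_trans (leq_bigmax_cond j isT) (leq_bigmax_cond l isT).
pose W (i : 'I_#|{: 'I_p0 * 'I_N}|) := let t := enum_val i in hcol b t.2 (w t.1).
exists _, (\matrix_(j, i) W i j 0), (fun i => val (enum_val i).2); split.
- apply/matrixP => i l; rewrite [RHS]mxE.
  transitivity ((A *m W l) i 0); last by rewrite /W (mulmx_hcol _ homA (Aw0 _)) mxE.
  by rewrite !mxE; apply: eq_bigr => j _; rewrite mxE.
- move=> v /Aw [r ->]; apply: cspan_mxE; apply: cspan_sum => l _; apply: cspanMr.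
  rewrite (sum_hcol (wN l)); apply: cspan_sum => e _.
  by have := cspan_gen W (enum_rank (l, e)); rewrite /W enum_rankK.
move=> j i; rewrite !mxE; case: ifP => bj; last by left.
by right; split=> //; exact: homog_hcomp.
Qed.

Lemma homogeneous_mx_mul m n p (A : 'M[R]_(m, n)) (B : 'M[R]_(n, p)) a b c :
  homogeneous_mx G A b c -> homogeneous_mx G B a b -> homogeneous_mx G (A *m B) a c.
Proof.
move=> homA homB i l; rewrite mxE.
case: (leqP (c i) (a l)) => cial; last first.
  left; apply: big1 => j _.
  case: (homA i j) => [->|[cibj _]]; first by rewrite mul0r.
  case: (homB j l) => [->|[bjal _]]; first by rewrite mulr0.
  by move: cial; lia.
right; split=> //; apply: (homog_sum graded) => j _.
case: (homA i j) => [->|[cibj GA]]; first by rewrite mul0r; exact: homog0.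
case: (homB j l) => [->|[bjal GB]]; first by rewrite mulr0; exact: homog0.
have -> : (a l - c i = (b j - c i) + (a l - b j))%N by lia.
exact: homogM.
Qed.

End HomogeneousSyzygies.

Section ProjectiveCoherence.
Variables (k : fieldType) (R : algType k) (G : nat -> R -> Prop).
Hypothesis fg_standard : is_fg_standard G.
Hypothesis rate_large : exists d0 : nat, forall d : nat, (d0 <= d)%N ->
  is_rate_filtration G (Fdeg G d).

Let graded : is_graded G.
Proof. by case: fg_standard => -[]. Qed.

Lemma ker_fg_homog_row n (a : 'rV[R]_n) (deg : 'I_n -> nat) :
  (forall j, G (deg j) (a 0 j)) -> ker_fg a.
Proof.
move=> homa; case: fg_standard => standard [s1 [_ s1_span]]; case: rate_large => d0 rate_d.
pose d := maxn d0 (\max_j deg j).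
have deg_d j : (deg j <= d)%N := leq_trans (leq_bigmax j) (leq_maxr _ _).
have Fa : Fdeg G d (rideal_of a).
  split; last exact: (rideal_of_m_le graded homa deg_d).
  split; [split; [exact: rideal_of0 | exact: rideal_ofD | exact: rideal_ofMr] | |].
    exact: (rideal_of_homog graded homa).
  exact: rideal_of_fg.
apply: (Fdeg_good (L := monomials_le s1 d) (rate_d d (leq_maxl _ _)) _ Fa) => //.
exact: (homog_kspan_monomials_le standard s1_span).
Qed.

Lemma ker_fg_homogeneous_mx m n (A : 'M[R]_(m, n)) b c :
  homogeneous_mx G A b c -> ker_fg A.
Proof.
elim: m n A b c => [|m IH] n A b c homA; first by rewrite flatmx0; exact: ker_fg0.
rewrite -[A](@vsubmxK _ 1 m).
have homA1 : homogeneous_mx G (usubmx (A : 'M_(1 + m, n))) b (fun i : 'I_1 => c (lshift m i)).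
  by move=> i j; rewrite mxE; exact: homA.
have homA2 : homogeneous_mx G (dsubmx (A : 'M_(1 + m, n))) b (fun i : 'I_m => c (rshift 1 i)).
  by move=> i j; rewrite mxE; exact: homA.
have ker_A1 : ker_fg (usubmx (A : 'M_(1 + m, n))).
  apply: (@ker_fg_homog_row _ _ (fun j => b j - c (lshift m (ord0 : 'I_1)))%N) => j.
  by case: (homA1 0 j) => [->|[_ GA]] //; exact: homog0.
have [p [K [e [A1K0 A1K homK]]]] := ker_fg_homog_gens graded homA1 ker_A1.
exact: ker_fg_col_mx A1K0 A1K (IH _ _ _ _ (homogeneous_mx_mul graded homA2 homK)).
Qed.

End ProjectiveCoherence.

Theorem mainTheorem14 (k : fieldType) (R : algType k) (G : nat -> R -> Prop) :
  is_fg_standard G ->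
  (exists d0 : nat, forall d : nat, (d0 <= d)%N ->
      is_rate_filtration G (Fdeg G d)) ->
  projective_coherent G.
Proof.
move=> fg_standard rate_large m n A b c; exact: ker_fg_homogeneous_mx.
Qed.
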